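(* With the order on $\widehat{\mathbb{R}^{\mathcal{D}_0}}$ defined in the context, $\widehat{\mathbb{R}^{\mathcal{D}_0}}$ is a totally ordered field, and for $a\in\widehat{\mathbb{R}^{\mathcal{D}_0}}$ we have $a\ge0$ if and only if $a=b^2$ for some $b\in\widehat{\mathbb{R}^{\mathcal{D}_0}}$. Consequently the map $|\cdot|:\widehat{\mathbb{C}^{\mathcal{D}_0}}\to\widehat{\mathbb{R}^{\mathcal{D}_0}}$, $|a+ib|=\sqrt{a^2+b^2}$ ($a,b\in\widehat{\mathbb{R}^{\mathcal{D}_0}}$), is an absolute value on $\widehat{\mathbb{C}^{\mathcal{D}_0}}$.
   Context: Fix $d\in\mathbb{N}$, $\mathcal{D}_0=\mathcal{D}(\mathbb{R}^d)$. For $\varphi\in\mathcal{D}_0$ let $R_\varphi=\sup\{\|x\|:\varphi(x)\neq0\}$ if $\varphi\neq0$, $R_0=1$. For $n\in\mathbb{N}$, $\mathcal{D}_n$ is the set of $\varphi\in\mathcal{D}_0$ that are real-valued, even, with $R_\varphi\le1/n$, $\int\varphi=1$, $\int x^\alpha\varphi(x)dx=0$ for $1\le|\alpha|\le n$, $\int|\varphi|\le1+1/n$, and $\sup_x|\partial^\alpha\varphi(x)|\le R_\varphi^{-2(|\alpha|+d)}$ for $|\alpha|\le n$. $\mathcal{U}$ is a fixed free ultrafilter on $\mathcal{D}_0$ containing every $\mathcal{D}_n$ (and $\mathfrak c^+$-good, $\mathfrak c=\mathrm{card}\,\mathbb{R}$). ''$P(\varphi)$ a.e.'' means $\{\varphi:P(\varphi)\}\in\mathcal{U}$.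 $\mathcal{M}(\mathbb{C}^{\mathcal{D}_0})$: nets $(A_\varphi)\in\mathbb{C}^{\mathcal{D}_0}$ with $|A_\varphi|\le R_\varphi^{-m}$ a.e. for some $m\in\mathbb{N}$; $\mathcal{N}(\mathbb{C}^{\mathcal{D}_0})$: nets with $|A_\varphi|<R_\varphi^p$ a.e. for all $p\in\mathbb{N}$. $\widehat{\mathbb{C}^{\mathcal{D}_0}}=\mathcal{M}/\mathcal{N}$ (pointwise operations), $\widehat{A_\varphi}$ the class, $\widehat{\mathbb{R}^{\mathcal{D}_0}}$ the classes of real-valued moderate nets. Order: a nonzero $\widehat{A_\varphi}\in\widehat{\mathbb{R}^{\mathcal{D}_0}}$ satisfies $\widehat{A_\varphi}>0$ iff $A_\varphi>0$ a.e. *)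

From HB Require Import structures.
From mathcomp Require Import all_boot all_order all_algebra.
From mathcomp Require Import all_classical all_reals all_analysis.
From mathcomp Require Import complex.

Set Implicit Arguments.
Unset Strict Implicit.
Unset Printing Implicit Defensive.

Import Order.TTheory GRing.Theory Num.Theory.
Import numFieldNormedType.Exports.
Local Open Scope classical_set_scope.
Local Open Scope ring_scope.
Local Open Scope complex_scope.

Section TestFunctions.
Variables (R : realType) (d : nat).
Local Notation V := 'rV[R]_d.

Definition enorm (x : V) : R := Num.sqrt (\sum_(i < d) x ord0 i ^+ 2).

Definition unitv (i : 'I_d) : V := delta_mx ord0 i.

Definition pder (l : seq 'I_d) (f : V -> R) : V -> R :=
  foldr (fun i g => fun x => 'D_(unitv i) g x) f l.

Definition smooth (f : V -> R) : Prop :=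
  forall (l : seq 'I_d) (x : V), differentiable (pder l f) x.

Definition mlen (a : 'I_d -> nat) : nat := (\sum_(i < d) a i)%N.
Definition mono (a : 'I_d -> nat) (x : V) : R := \prod_(i < d) x ord0 i ^+ a i.
Definition pdera (a : 'I_d -> nat) (f : V -> R) : V -> R :=
  pder (flatten [seq nseq (a i) i | i <- enum 'I_d]) f.

(* test functions D(R^d): complex valued, smooth, compact (= bounded) support *)
Definition test_fun (f : V -> R[i]) : Prop :=
  [/\ smooth (fun x => complex.Re (f x)), smooth (fun x => complex.Im (f x)) &
      exists M : R, forall x, M < enorm x -> f x = 0].

Definition D0 := {f : V -> R[i] | test_fun f}.

Definition Rad (phi : D0) : R :=
  if pselect (exists x, sval phi x != 0)
  then sup [set enorm x | x in [set x | sval phi x != 0]]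
  else 1.

End TestFunctions.

(* Lebesgue integral over R^d, computed as an iterated integral
   (all integrands below are continuous with compact support, so this is
   the d-dimensional Lebesgue integral by Fubini). *)
Fixpoint iint (R : realType) (n : nat) : ('rV[R]_n -> R) -> R :=
  match n return ('rV[R]_n -> R) -> R with
  | 0 => fun f => f 0
  | n'.+1 => fun f =>
      Rintegral (@lebesgue_measure R) setT
        (fun t : R => @iint R n' (fun y => f (row_mx (\row_(_ < 1) t) y)))
  end.

Section Dn.
Variables (R : realType) (d : nat).
Local Notation V := 'rV[R]_d.

Definition Dn (n : nat) : set (D0 R d) :=
  [set phi | let f := fun x : V => complex.Re (sval phi x) in
    (forall x, complex.Im (sval phi x) = 0) /\
    (forall x, sval phi (- x) = sval phi x) /\
    Rad phi <= n%:R^-1 /\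
    iint f = 1 /\
    (forall a, (1 <= mlen a <= n)%N -> iint (fun x => mono a x * f x) = 0) /\
    iint (fun x => `|f x|) <= 1 + n%:R^-1 /\
    (forall a, (mlen a <= n)%N ->
       forall x, `|pdera a f x| <= Rad phi ^- (2 * (mlen a + d)))].

Definition free_ultrafilter (U : set (set (D0 R d))) : Prop :=
  U setT /\ ~ U set0 /\
  (forall A B, U A -> U B -> U (A `&` B)) /\
  (forall A B, A `<=` B -> U A -> U B) /\
  (forall A, U A \/ U (~` A)) /\
  (forall phi, ~ U [set phi]).

(* c^+-good (c = card R): for every cardinal mu <= c (realised as a subset S
   of R) and every monotone (decreasing) map F from finite subsets of S into U,
   there is a multiplicative G from finite subsets of S into U with G <= F. *)
Definition cplus_good (U : set (set (D0 R d))) : Prop :=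
  forall (S : set R) (F : set R -> set (D0 R d)),
    (forall s, finite_set s -> s `<=` S -> U (F s)) ->
    (forall s t, finite_set t -> t `<=` S -> s `<=` t -> F t `<=` F s) ->
    exists G : set R -> set (D0 R d),
      (forall s, finite_set s -> s `<=` S -> U (G s) /\ G s `<=` F s) /\
      (forall s t, finite_set s -> finite_set t -> s `<=` S -> t `<=` S ->
         G (s `|` t) = G s `&` G t).

Record adm_uf := AdmUF {
  UF :> set (set (D0 R d));
  UF_free : free_ultrafilter UF;
  UF_Dn : forall n, (0 < n)%N -> UF (Dn n);
  UF_good : cplus_good UF }.

End Dn.

Definition choose_or (T : Type) (x0 : T) (P : T -> Prop) : T :=
  match pselect (exists x, P x) with
  | left h => projT1 (cid h)
  | right _ => x0
  end.

Section Nets.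
Variables (R : realType) (d : nat) (U : adm_uf R d).
Local Notation D := (D0 R d).

Definition ae (P : D -> Prop) : Prop := UF U [set phi | P phi].

Definition moderateC (A : D -> R[i]) : Prop :=
  exists m : nat, ae (fun phi => `|A phi| <= (Rad phi ^- m)%:C).
Definition negligibleC (A : D -> R[i]) : Prop :=
  forall p : nat, ae (fun phi => `|A phi| < (Rad phi ^+ p)%:C).
Definition moderateR (A : D -> R) : Prop :=
  exists m : nat, ae (fun phi => `|A phi| <= Rad phi ^- m).
Definition negligibleR (A : D -> R) : Prop :=
  forall p : nat, ae (fun phi => `|A phi| < Rad phi ^+ p).

Definition clsC (A : D -> R[i]) : set (D -> R[i]) :=
  [set B | moderateC B /\ negligibleC (fun phi => A phi - B phi)].
Definition clsR (A : D -> R) : set (D -> R) :=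
  [set B | moderateR B /\ negligibleR (fun phi => A phi - B phi)].

Definition Chat := {C : set (D -> R[i]) | exists A, moderateC A /\ C = clsC A}.
Definition Rhat := {C : set (D -> R) | exists A, moderateR A /\ C = clsR A}.

Lemma ae_setT (P : D -> Prop) : (forall phi, P phi) -> ae P.
Proof.
move=> HP; rewrite /ae.
have -> : [set phi | P phi] = setT by apply/seteqP; split=> // x _; exact: HP.
by case: (UF_free U).
Qed.

Lemma moderateC0 : moderateC (fun _ => 0).
Proof. by exists 0%N; apply: ae_setT => phi; rewrite normr0 expr0 invr1. Qed.
Lemma moderateR0 : moderateR (fun _ => 0).
Proof. by exists 0%N; apply: ae_setT => phi; rewrite normr0 expr0 invr1. Qed.

Definition hzeroC : Chat :=
  exist _ (clsC (fun _ => 0)) (ex_intro _ _ (conj moderateC0 erefl)).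
Definition hzeroR : Rhat :=
  exist _ (clsR (fun _ => 0)) (ex_intro _ _ (conj moderateR0 erefl)).

(* class of a net (the class of 0 if the net is not moderate) *)
Definition hmkC (A : D -> R[i]) : Chat :=
  match pselect (moderateC A) with
  | left h => exist _ (clsC A) (ex_intro _ A (conj h erefl))
  | right _ => hzeroC
  end.
Definition hmkR (A : D -> R) : Rhat :=
  match pselect (moderateR A) with
  | left h => exist _ (clsR A) (ex_intro _ A (conj h erefl))
  | right _ => hzeroR
  end.

Definition hrepC (x : Chat) : D -> R[i] := projT1 (cid (proj2_sig x)).
Definition hrepR (x : Rhat) : D -> R := projT1 (cid (proj2_sig x)).

Definition honeR : Rhat := hmkR (fun _ => 1).
Definition haddR (x y : Rhat) : Rhat := hmkR (fun phi => hrepR x phi + hrepR y phi).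
Definition hoppR (x : Rhat) : Rhat := hmkR (fun phi => - hrepR x phi).
Definition hmulR (x y : Rhat) : Rhat := hmkR (fun phi => hrepR x phi * hrepR y phi).

Definition haddC (x y : Chat) : Chat := hmkC (fun phi => hrepC x phi + hrepC y phi).
Definition hmulC (x y : Chat) : Chat := hmkC (fun phi => hrepC x phi * hrepC y phi).
Definition hiC : Chat := hmkC (fun _ => 'i).
Definition hRtoC (x : Rhat) : Chat := hmkC (fun phi => (hrepR x phi)%:C).

Definition hposR (x : Rhat) : Prop :=
  x <> hzeroR /\ exists A, sval x A /\ ae (fun phi => 0 < A phi).
Definition hltR (x y : Rhat) : Prop := hposR (haddR y (hoppR x)).
Definition hleR (x y : Rhat) : Prop := x = y \/ hltR x y.

Definition hcabs (z : Chat) : Rhat :=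
  choose_or hzeroR (fun c => exists a b : Rhat,
     [/\ z = haddC (hRtoC a) (hmulC hiC (hRtoC b)),
         hleR hzeroR c & hmulR c c = haddR (hmulR a a) (hmulR b b)]).

End Nets.

From Pilot Require Import Defs.
From HB Require Import structures.
From mathcomp Require Import all_boot all_order all_algebra.
From mathcomp Require Import all_classical all_reals all_analysis.
From mathcomp Require Import complex.
From mathcomp Require Import ring lra.
Import Order.TTheory GRing.Theory Num.Theory.
Local Open Scope classical_set_scope.
Local Open Scope ring_scope.
Set Implicit Arguments.
Unset Strict Implicit.
Unset Printing Implicit Defensive.

(* Since [Dn 1] and [Dn 2] belong to U, we have 0 < Rad phi <= 1/2 a.e., so the
   powers of Rad phi form a strictly decreasing scale. As U is an ultrafilter, a
   moderate net A that is not negligible satisfies |A| >= Rad^p a.e. for some p,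
   and then either A >= Rad^p a.e. or -A >= Rad^p a.e. The first fact makes 1/A
   moderate, so the quotient is a field; the second gives the trichotomy of the
   order, whose positive cone is closed under sums and products because
   Rad^p Rad^q = Rad^(p+q). A nonnegative class is the square of the class of
   sqrt A. Finally the pointwise complex modulus respects negligibility, so it
   descends to the quotient of complex nets, where it is the nonnegative square
   root of a^2 + b^2 and inherits multiplicativity and the triangle inequality. *)

Lemma Rad_ge0 (R : realType) (d : nat) (phi : D0 R d) : 0 <= Rad phi.
Proof.
rewrite /Rad; destruct pselect as [[x phix_neq0]|phi0]; last exact: ler01.
case: (svalP phi) => _ _ [M suppM].
have supp_ub : has_sup [set enorm x | x in [set x | sval phi x != 0]].
  split; first by exists (enorm x), x.
  exists M => _ [y phiy_neq0 <-]; rewrite leNgt; apply/negP => /suppM phiy0.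
  by move: phiy_neq0; rewrite /= phiy0 eqxx.
apply: le_trans (sup_upper_bound supp_ub (ex_intro2 _ _ x phix_neq0 erefl)).
exact: sqrtr_ge0.
Qed.

(* The bound on the 0-th derivative in [Dn 1] reads [|phi| <= Rad phi ^- 2d],
   which forces [phi = 0] when [Rad phi = 0] (recall [0^-1 = 0]). *)
Lemma Dn1_Rad_gt0 (R : realType) (n : nat) (phi : D0 R n.+1) :
  Dn 1 phi -> 0 < Rad phi.
Proof.
move=> [phi_real [_ [_ [_ [_ [_ phi_bound]]]]]].
rewrite lt_def Rad_ge0 andbT; apply/negP => /eqP Rad0.
move: (Rad0); rewrite /Rad; destruct pselect as [[x phix_neq0]|phi0]; last first.
  by move/eqP; rewrite oner_eq0.
move=> _.
have := phi_bound (fun _ => 0%N) _ x.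
have mlen0 : mlen (fun _ : 'I_n.+1 => 0%N) = 0%N by rewrite /mlen big1.
rewrite mlen0 => /(_ isT).
have -> : pdera (fun=> 0%N) (fun x => complex.Re (sval phi x)) =
          (fun x => complex.Re (sval phi x)) by rewrite /pdera; elim: (enum _).
rewrite Rad0 add0n expr0n /= invr0 normr_le0 => /eqP phix_re0.
move: phix_neq0 (phi_real x); case: (sval phi x) phix_re0 => a b /= -> + b0.
by rewrite b0 eqxx.
Qed.

Lemma Dn1_dim0_eq1 (R : realType) (phi : D0 R 0) : Dn 1 phi -> sval phi = fun=> 1.
Proof.
move=> [phi_real [_ [_ [phi_int1 _]]]]; apply/funext => x.
rewrite (thinmx0 x); move: phi_int1 (phi_real 0); rewrite /iint.
by case: (sval phi 0) => a b /= -> ->.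
Qed.

(* In dimension 0, [Dn 1] has at most one element, so it cannot belong to a
   free ultrafilter. *)
Lemma no_adm_uf_dim0 (R : realType) (U : adm_uf R 0) : False.
Proof.
case: (UF_free U) => _ [U_neq0 [_ [U_mono [_ U_free]]]].
have U_D1 := UF_Dn U (ltn0Sn 0).
have [phi phi_D1] : exists phi, Dn (R := R) (d := 0) 1 phi.
  apply: contrapT => D1_empty; apply: U_neq0.
  suff <- : Dn (R := R) (d := 0) 1 = set0 by [].
  by apply/seteqP; split => // phi phi_D1; apply: D1_empty; exists phi.
apply: (U_free phi); apply: U_mono U_D1 => psi psi_D1.
apply: eq_sig_hprop => [? ? ?|]; first exact: Prop_irrelevance.
by rewrite (Dn1_dim0_eq1 psi_D1) (Dn1_dim0_eq1 phi_D1).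
Qed.

Section AlmostEverywhere.
Variables (R : realType) (d : nat) (U : adm_uf R d).
Local Notation ae := (ae U).

Lemma aeI (P Q : D0 R d -> Prop) : ae P -> ae Q -> ae (fun phi => P phi /\ Q phi).
Proof. by case: (UF_free U) => _ [_ [U_meet _]]; exact: U_meet. Qed.

Lemma aeW (P Q : D0 R d -> Prop) : (forall phi, P phi -> Q phi) -> ae P -> ae Q.
Proof. by case: (UF_free U) => _ [_ [_ [U_mono _]]]; exact: U_mono. Qed.

Lemma ae_False : ~ ae (fun=> False).
Proof.
case: (UF_free U) => _ [U_neq0 _]; rewrite /Defs.ae.
by have -> : [set _ : D0 R d | False] = set0 by apply/seteqP; split => // ? [].
Qed.

Lemma ae_or_not (P : D0 R d -> Prop) : ae P \/ ae (fun phi => ~ P phi).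
Proof. by case: (UF_free U) => _ [_ [_ [_ [U_compl _]]]]; exact: U_compl. Qed.

End AlmostEverywhere.

Definition small_radius (R : realType) (d : nat) (phi : D0 R d) := 0 < Rad phi <= 2^-1.

Lemma ae_small_radius (R : realType) (d : nat) (U : adm_uf R d) :
  ae U (@small_radius R d).
Proof.
case: d U => [|n] U; first by case: (no_adm_uf_dim0 U).
apply: aeW (aeI (UF_Dn U (ltn0Sn 0)) (UF_Dn U (ltn0Sn 1))).
by move=> phi [phi_D1 [_ [_ [Rad_le _]]]]; rewrite /small_radius Dn1_Rad_gt0.
Qed.

Section SmallScale.
Variables (R : realType) (r : R).
Hypothesis r_small : 0 < r <= 2^-1.

Let r_gt0 : 0 < r. Proof. by case/andP: r_small. Qed.
Let r_le1 : r <= 1. Proof. case/andP: r_small => _; lra. Qed.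

Lemma expr_halfS p : 2 * r ^+ p.+1 <= r ^+ p.
Proof.
rewrite exprS mulrA; apply: ler_piMl; first exact/exprn_ge0/ltW.
by case/andP: r_small => _; lra.
Qed.

Lemma exprV_doubleS m : 2 * r ^- m <= r ^- m.+1.
Proof.
rewrite exprS invfM ler_pM2r ?invr_gt0 ?exprn_gt0 //.
by rewrite -div1r ler_pdivlMr //; case/andP: r_small => _; lra.
Qed.

Lemma expr_le_addn p k : r ^+ (p + k) <= r ^+ p.
Proof. by apply: ler_wiXn2l; [exact: ltW | | exact: leq_addr]. Qed.

Lemma exprV_le_addn m k : r ^- m <= r ^- (m + k).
Proof. by rewrite lef_pV2 ?posrE ?exprn_gt0 ?expr_le_addn. Qed.

End SmallScale.

Section SizeFunctions.
Variables (R : realType) (d : nat) (U : adm_uf R d).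
Local Notation D := (D0 R d).
Local Notation ae := (ae U).

Lemma ae_small (P : D -> Prop) : (forall phi, small_radius phi -> P phi) -> ae P.
Proof. by move=> P_small; apply: aeW P_small (ae_small_radius U). Qed.

Lemma ae_smallW (P Q : D -> Prop) :
  (forall phi, small_radius phi -> P phi -> Q phi) -> ae P -> ae Q.
Proof.
by move=> PQ aeP; apply: aeW (aeI (ae_small_radius U) aeP) => phi [/PQ]; apply.
Qed.

Lemma ae_smallW2 (P P' Q : D -> Prop) :
  (forall phi, small_radius phi -> P phi -> P' phi -> Q phi) -> ae P -> ae P' -> ae Q.
Proof.
move=> PQ aeP aeP'; apply: ae_smallW (aeI aeP aeP') => phi small [].
exact: PQ.
Qed.

Lemma ae_small_False (P : D -> Prop) :
  (forall phi, small_radius phi -> ~ P phi) -> ~ ae P.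
Proof. by move=> notP /(ae_smallW notP); exact: ae_False. Qed.

Definition moderate (s : D -> R) := exists m : nat, ae (fun phi => s phi <= Rad phi ^- m).
Definition negligible (s : D -> R) := forall p : nat, ae (fun phi => s phi < Rad phi ^+ p).

Lemma moderate_le s t : ae (fun phi => s phi <= t phi) -> moderate t -> moderate s.
Proof. by move=> st [m tm]; exists m; apply: ae_smallW2 st tm => phi _; exact: le_trans. Qed.

Lemma negligible_le s t : ae (fun phi => s phi <= t phi) -> negligible t -> negligible s.
Proof. by move=> st t_negl p; apply: ae_smallW2 st (t_negl p) => phi _; exact: le_lt_trans. Qed.

Lemma moderate_le1 s : (forall phi, s phi <= 1) -> moderate s.
Proof. by move=> s_le1; exists 0%N; apply: ae_small => phi _; rewrite expr0 invr1. Qed.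

Lemma ae_eq0_negligible s : ae (fun phi => s phi = 0) -> negligible s.
Proof.
move=> s0 p; apply: ae_smallW s0 => phi /andP[Rad_gt0 _] ->.
exact: exprn_gt0.
Qed.

Lemma moderateD s t : moderate s -> moderate t -> moderate (fun phi => s phi + t phi).
Proof.
move=> [m sm] [n tn]; exists (m + n).+1; apply: ae_smallW2 sm tn => phi small sm tn.
have := exprV_doubleS small (m + n).
have := exprV_le_addn small m n; have := exprV_le_addn small n m.
by rewrite addnC; lra.
Qed.

Lemma negligibleD s t : negligible s -> negligible t -> negligible (fun phi => s phi + t phi).
Proof.
move=> s_negl t_negl p; apply: ae_smallW2 (s_negl p.+1) (t_negl p.+1) => phi small sp tp.
by have := expr_halfS small p; lra.
Qed.

Lemma moderateM s t : (forall phi, 0 <= s phi) -> (forall phi, 0 <= t phi) ->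
  moderate s -> moderate t -> moderate (fun phi => s phi * t phi).
Proof.
move=> s_ge0 t_ge0 [m sm] [n tn]; exists (m + n).
by apply: ae_smallW2 sm tn => phi _ sm tn; rewrite exprD invfM ler_pM.
Qed.

(* [s <= Rad^(p + m)] and [t <= Rad^-m] give [s * t <= Rad^p]. *)
Lemma negligibleM s t : (forall phi, 0 <= s phi) -> (forall phi, 0 <= t phi) ->
  negligible s -> moderate t -> negligible (fun phi => s phi * t phi).
Proof.
move=> s_ge0 t_ge0 s_negl [m tm] p.
apply: ae_smallW2 (s_negl (p + m)%N) tm => phi /andP[Rad_gt0 _] sp tm.
have <- : Rad phi ^+ (p + m) * Rad phi ^- m = Rad phi ^+ p.
  by rewrite exprD mulfK // expf_neq0 // gt_eqF.
apply: le_lt_trans (ler_wpM2l (s_ge0 phi) tm) _.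
by rewrite ltr_pM2r // invr_gt0 exprn_gt0.
Qed.

Lemma not_negligible s : ~ negligible s -> exists p, ae (fun phi => Rad phi ^+ p <= s phi).
Proof.
move=> s_not_negl; apply: contrapT => s_small; apply: s_not_negl => p.
case: (ae_or_not U (fun phi => s phi < Rad phi ^+ p)) => // s_big.
exfalso; apply: s_small; exists p; apply: aeW s_big => phi.
by rewrite ltNge => /negP; rewrite negbK.
Qed.

End SizeFunctions.

Record absval (R : realType) (V : comNzRingType) := AbsVal {
  absv :> V -> R;
  absv_ge0 : forall x, 0 <= absv x;
  absv0 : absv 0 = 0;
  absvN : forall x, absv (- x) = absv x;
  absvD : forall x y, absv (x + y) <= absv x + absv y;
  absvM : forall x y, absv (x * y) = absv x * absv y }.

(* For [absR], [moderate_net] and [negligible_net] below are convertible to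
   [moderateR] and [negligibleR]; for [absC] they are only equivalent to
   [moderateC] and [negligibleC] ([moderateCE], [negligibleCE]). *)
Definition absR (R : realType) : absval R R :=
  AbsVal (@normr_ge0 _ R) (@normr0 _ R) (@normrN _ R) (@ler_normD _ R) (@normrM R).

Section Nets.
Variables (R : realType) (d : nat) (U : adm_uf R d).
Variables (V : comNzRingType) (N : absval R V).
Local Notation D := (D0 R d).

Definition moderate_net (A : D -> V) := moderate U (fun phi => N (A phi)).
Definition negligible_net (A : D -> V) := negligible U (fun phi => N (A phi)).
Definition net_equiv (A B : D -> V) := negligible_net (fun phi => A phi - B phi).

Lemma moderate_net_cst c : N c <= 1 -> moderate_net (fun=> c).
Proof. by move=> c_le1; apply: moderate_le1. Qed.

Lemma moderate_netD A B :
  moderate_net A -> moderate_net B -> moderate_net (fun phi => A phi + B phi).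
Proof.
move=> A_mod B_mod; apply: moderate_le (moderateD A_mod B_mod).
by apply: ae_small => phi _; exact: absvD.
Qed.

Lemma moderate_netN A : moderate_net A -> moderate_net (fun phi => - A phi).
Proof. by move=> [m Am]; exists m; apply: aeW Am => phi; rewrite absvN. Qed.

Lemma moderate_netM A B :
  moderate_net A -> moderate_net B -> moderate_net (fun phi => A phi * B phi).
Proof.
move=> A_mod B_mod; apply: moderate_le (moderateM _ _ A_mod B_mod) => //.
  by apply: ae_small => phi _; rewrite absvM.
all: by move=> phi; exact: absv_ge0.
Qed.

Lemma negligible_netD A B :
  negligible_net A -> negligible_net B -> negligible_net (fun phi => A phi + B phi).
Proof.
move=> A_negl B_negl; apply: negligible_le (negligibleD A_negl B_negl).
by apply: ae_small => phi _; exact: absvD.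
Qed.

Lemma negligible_netN A : negligible_net A -> negligible_net (fun phi => - A phi).
Proof. by move=> A_negl p; apply: aeW (A_negl p) => phi; rewrite absvN. Qed.

Lemma negligible_netM A B :
  negligible_net A -> moderate_net B -> negligible_net (fun phi => A phi * B phi).
Proof.
move=> A_negl B_mod; apply: negligible_le (negligibleM _ _ A_negl B_mod).
  by apply: ae_small => phi _; rewrite absvM.
all: by move=> phi; exact: absv_ge0.
Qed.

Lemma eq_negligible_net A B : A =1 B -> negligible_net A -> negligible_net B.
Proof. by move=> /funext ->. Qed.

Lemma net_equiv_ae A B : ae U (fun phi => A phi = B phi) -> net_equiv A B.
Proof.
move=> AB; apply: ae_eq0_negligible; apply: aeW AB => phi ->.
by rewrite subrr absv0.
Qed.

Lemma net_equiv_refl A : net_equiv A A.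
Proof. exact/net_equiv_ae/ae_small. Qed.

Lemma net_equiv_sym A B : net_equiv A B -> net_equiv B A.
Proof. by move/negligible_netN; apply: eq_negligible_net => phi /=; ring. Qed.

Lemma net_equiv_trans A B C : net_equiv A B -> net_equiv B C -> net_equiv A C.
Proof.
by move=> AB BC; apply: eq_negligible_net (negligible_netD AB BC) => phi /=; ring.
Qed.

Lemma net_equivD A A' B B' : net_equiv A A' -> net_equiv B B' ->
  net_equiv (fun phi => A phi + B phi) (fun phi => A' phi + B' phi).
Proof.
by move=> AA' BB'; apply: eq_negligible_net (negligible_netD AA' BB') => phi /=; ring.
Qed.

Lemma net_equivN A A' : net_equiv A A' ->
  net_equiv (fun phi => - A phi) (fun phi => - A' phi).
Proof. by move/negligible_netN; apply: eq_negligible_net => phi /=; ring. Qed.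

(* [A B - A' B' = (B - B') A + (A - A') B'] *)
Lemma net_equivM A A' B B' : moderate_net A -> moderate_net B' ->
  net_equiv A A' -> net_equiv B B' ->
  net_equiv (fun phi => A phi * B phi) (fun phi => A' phi * B' phi).
Proof.
move=> A_mod B'_mod AA' BB'; apply: eq_negligible_net
  (negligible_netD (negligible_netM BB' A_mod) (negligible_netM AA' B'_mod)).
by move=> phi /=; ring.
Qed.

End Nets.

Section RealClasses.
Variables (R : realType) (d : nat) (U : adm_uf R d).
Local Notation modR := (moderate_net U (absR R)).
Local Notation negR := (negligible_net U (absR R)).
Local Notation equivR := (net_equiv U (absR R)).

Lemma Rhat_inj (x y : Rhat U) : sval x = sval y -> x = y.
Proof. by apply: eq_sig_hprop => ? ? ?; exact: Prop_irrelevance. Qed.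

Lemma hmkR_val A : modR A -> sval (hmkR U A) = clsR U A.
Proof. by rewrite /hmkR; case: pselect. Qed.

Lemma hrepR_spec (x : Rhat U) : modR (hrepR x) /\ sval x = clsR U (hrepR x).
Proof. by rewrite /hrepR; case: cid => A /= [A_mod ->]. Qed.

Lemma hrepR_moderate (x : Rhat U) : modR (hrepR x).
Proof. by case: (hrepR_spec x). Qed.

Lemma clsR_eq A B : modR A -> modR B -> clsR U A = clsR U B <-> equivR A B.
Proof.
move=> A_mod B_mod; split=> [AB | AB].
  suff [] : clsR U A B by [].
  by rewrite AB; split => //; exact: (net_equiv_refl U (absR R)).
apply/seteqP; split=> C [C_mod equivC]; split=> //.
  exact: net_equiv_trans (net_equiv_sym AB) equivC.
exact: net_equiv_trans AB equivC.
Qed.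

Lemma hmkR_eq A B : modR A -> modR B -> hmkR U A = hmkR U B <-> equivR A B.
Proof.
move=> A_mod B_mod; rewrite -clsR_eq // -hmkR_val // -[clsR U B]hmkR_val //.
by split=> [-> // | AB]; apply: Rhat_inj.
Qed.

Lemma hrepRK (x : Rhat U) : hmkR U (hrepR x) = x.
Proof. by case: (hrepR_spec x) => x_mod x_cls; apply: Rhat_inj; rewrite hmkR_val. Qed.

Lemma hrepR_hmkR A : modR A -> equivR (hrepR (hmkR U A)) A.
Proof.
move=> A_mod; rewrite -(clsR_eq (hrepR_moderate _) A_mod).
by case: (hrepR_spec (hmkR U A)) => _ <-; rewrite hmkR_val.
Qed.

Lemma Rhat_ind (P : Rhat U -> Prop) :
  (forall A, modR A -> P (hmkR U A)) -> forall x, P x.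
Proof. by move=> P_hmkR x; rewrite -(hrepRK x); exact/P_hmkR/hrepR_moderate. Qed.

Lemma moderateR0 : modR (fun=> 0).
Proof. by apply: (moderate_net_cst U (N := absR R)); rewrite /= normr0. Qed.

Lemma moderateR1 : modR (fun=> 1).
Proof. by apply: (moderate_net_cst U (N := absR R)); rewrite /= normr1. Qed.

Lemma hzeroRE : hzeroR U = hmkR U (fun=> 0).
Proof. by apply: Rhat_inj; rewrite hmkR_val //; exact: moderateR0. Qed.

Lemma hmkR_eq0 A : modR A -> hmkR U A = hzeroR U <-> negR A.
Proof.
move=> A_mod; rewrite hzeroRE hmkR_eq //; last exact: moderateR0.
by rewrite /net_equiv; under eq_fun do rewrite subr0.
Qed.

Lemma haddRE A B : modR A -> modR B ->
  haddR (hmkR U A) (hmkR U B) = hmkR U (fun phi => A phi + B phi).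
Proof.
move=> A_mod B_mod; rewrite /haddR hmkR_eq.
- exact: net_equivD (hrepR_hmkR A_mod) (hrepR_hmkR B_mod).
- exact: moderate_netD (hrepR_moderate _) (hrepR_moderate _).
- exact: moderate_netD.
Qed.

Lemma hoppRE A : modR A -> hoppR (hmkR U A) = hmkR U (fun phi => - A phi).
Proof.
move=> A_mod; rewrite /hoppR hmkR_eq.
- exact: net_equivN (hrepR_hmkR A_mod).
- exact: moderate_netN (hrepR_moderate _).
- exact: moderate_netN.
Qed.

Lemma hmulRE A B : modR A -> modR B ->
  hmulR (hmkR U A) (hmkR U B) = hmkR U (fun phi => A phi * B phi).
Proof.
move=> A_mod B_mod; rewrite /hmulR hmkR_eq.
- exact: net_equivM (hrepR_moderate _) B_mod (hrepR_hmkR A_mod) (hrepR_hmkR B_mod).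
- exact: moderate_netM (hrepR_moderate _) (hrepR_moderate _).
- exact: moderate_netM.
Qed.

End RealClasses.

Arguments moderateR0 {R d U}.
Arguments moderateR1 {R d U}.

Section RealField.
Variables (R : realType) (d : nat) (U : adm_uf R d).
Local Notation modR := (moderate_net U (absR R)).
Local Notation negR := (negligible_net U (absR R)).

Definition RH := Rhat U.
HB.instance Definition _ := gen_eqMixin RH.
HB.instance Definition _ := gen_choiceMixin RH.

Lemma haddRA : associative (@haddR R d U : RH -> RH -> RH).
Proof.
elim/Rhat_ind => A A_mod; elim/Rhat_ind => B B_mod; elim/Rhat_ind => C C_mod.
rewrite !haddRE //; try exact: moderate_netD.
by congr hmkR; apply/funext => phi; rewrite addrA.
Qed.

Lemma haddRC : commutative (@haddR R d U : RH -> RH -> RH).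
Proof.
elim/Rhat_ind => A A_mod; elim/Rhat_ind => B B_mod.
by rewrite !haddRE //; congr hmkR; apply/funext => phi; rewrite addrC.
Qed.

Lemma hadd0R : left_id (hzeroR U : RH) (@haddR R d U).
Proof.
elim/Rhat_ind => A A_mod; rewrite hzeroRE haddRE //; last exact: moderateR0.
by congr hmkR; apply/funext => phi; rewrite add0r.
Qed.

Lemma haddNR : left_inverse (hzeroR U : RH) (@hoppR R d U) (@haddR R d U).
Proof.
elim/Rhat_ind => A A_mod; rewrite hoppRE // haddRE ?hzeroRE //; last exact: moderate_netN.
by congr hmkR; apply/funext => phi; rewrite addNr.
Qed.

HB.instance Definition _ := GRing.isZmodule.Build RH haddRA haddRC hadd0R haddNR.

Lemma hmulRA : associative (@hmulR R d U : RH -> RH -> RH).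
Proof.
elim/Rhat_ind => A A_mod; elim/Rhat_ind => B B_mod; elim/Rhat_ind => C C_mod.
rewrite !hmulRE //; try exact: moderate_netM.
by congr hmkR; apply/funext => phi; rewrite mulrA.
Qed.

Lemma hmulRC : commutative (@hmulR R d U : RH -> RH -> RH).
Proof.
elim/Rhat_ind => A A_mod; elim/Rhat_ind => B B_mod.
by rewrite !hmulRE //; congr hmkR; apply/funext => phi; rewrite mulrC.
Qed.

Lemma hmul1R : left_id (honeR U : RH) (@hmulR R d U).
Proof.
elim/Rhat_ind => A A_mod; rewrite /honeR hmulRE //; last exact: moderateR1.
by congr hmkR; apply/funext => phi; rewrite mul1r.
Qed.

Lemma hmulRDl : left_distributive (@hmulR R d U : RH -> RH -> RH) (@haddR R d U).
Proof.
elim/Rhat_ind => A A_mod; elim/Rhat_ind => B B_mod; elim/Rhat_ind => C C_mod.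
rewrite haddRE // !hmulRE // ?haddRE //; try exact: moderate_netM; try exact: moderate_netD.
by congr hmkR; apply/funext => phi; rewrite mulrDl.
Qed.

Lemma honeR_neq0 : (honeR U : RH) != hzeroR U.
Proof.
apply/eqP => /(hmkR_eq0 moderateR1) /(_ 0%N).
by apply: ae_small_False => phi _; rewrite /= normr1 expr0 ltxx.
Qed.

HB.instance Definition _ :=
  GRing.Zmodule_isComNzRing.Build RH hmulRA hmulRC hmul1R hmulRDl honeR_neq0.

Definition hinvR (x : RH) : RH :=
  if pselect (x = 0) then 0 else hmkR U (fun phi => (hrepR x phi)^-1) : RH.

Lemma hmulVR (x : RH) : x != 0 -> hinvR x * x = 1.
Proof.
move=> /eqP x_neq0; rewrite /hinvR; destruct pselect as [x0|x_nz]; first by case: x_neq0.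
have A_mod := hrepR_moderate x; set A := hrepR x in A_mod *.
have [p Ap] : exists p, ae U (fun phi => Rad phi ^+ p <= `|A phi|).
  apply: not_negligible => A_negl; apply: x_neq0.
  by rewrite -(hrepRK x) hmkR_eq0.
have A_neq0 : ae U (fun phi => A phi != 0).
  apply: ae_smallW Ap => phi /andP[Rad_gt0 _] Ap.
  by rewrite -normr_gt0; apply: lt_le_trans Ap; exact: exprn_gt0.
have AV_mod : modR (fun phi => (A phi)^-1).
  exists p; apply: ae_smallW Ap => phi /andP[Rad_gt0 _] Ap.
  have A_gt0 : 0 < `|A phi| by apply: lt_le_trans Ap; exact: exprn_gt0.
  by rewrite /= normfV lef_pV2 ?posrE ?exprn_gt0.
rewrite -[X in _ * X]hrepRK -/A.
change (hmulR (hmkR U (fun phi => (A phi)^-1)) (hmkR U A) = honeR U).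
rewrite hmulRE // /honeR hmkR_eq //; [|exact: moderate_netM | exact: moderateR1].
by apply: net_equiv_ae; apply: aeW A_neq0 => phi; exact: mulVf.
Qed.

Lemma hinvR0 : hinvR 0 = 0.
Proof. by rewrite /hinvR; destruct pselect as [|nz]; last by case: nz. Qed.

HB.instance Definition _ := GRing.ComNzRing_isField.Build RH hmulVR hinvR0.

End RealField.

Section RealOrder.
Variables (R : realType) (d : nat) (U : adm_uf R d).
Local Notation modR := (moderate_net U (absR R)).
Local Notation negR := (negligible_net U (absR R)).
Local Notation F := (RH U).

Definition strictly_pos (A : D0 R d -> R) :=
  exists p : nat, ae U (fun phi => Rad phi ^+ p <= A phi).

Lemma strictly_pos_not_negligible A : strictly_pos A -> ~ negR A.
Proof.
move=> [p Ap] /(_ p) A_small; apply: ae_False (aeW _ (aeI Ap A_small)) => phi [].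
by have := ler_norm (A phi); rewrite /=; lra.
Qed.

Lemma strictly_pos_opp A : strictly_pos A -> ~ strictly_pos (fun phi => - A phi).
Proof.
move=> [p Ap] [q NAq]; apply: ae_small_False (aeI Ap NAq) => phi /andP[Rad_gt0 _] [].
by have := exprn_gt0 p Rad_gt0; have := exprn_gt0 q Rad_gt0; lra.
Qed.

Lemma strictly_posD A B :
  strictly_pos A -> strictly_pos B -> strictly_pos (fun phi => A phi + B phi).
Proof.
move=> [p Ap] [q Bq]; exists (p + q)%N; apply: ae_smallW2 Ap Bq => phi small Ap Bq.
have := expr_le_addn small p q; have := exprn_gt0 q (proj1 (andP small)); lra.
Qed.

Lemma strictly_posM A B :
  strictly_pos A -> strictly_pos B -> strictly_pos (fun phi => A phi * B phi).
Proof.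
move=> [p Ap] [q Bq]; exists (p + q)%N.
apply: ae_smallW2 Ap Bq => phi /andP[Rad_gt0 _] Ap Bq.
by rewrite exprD ler_pM // ltW // exprn_gt0.
Qed.

Lemma negligible_or_strictly_pos A :
  negR A \/ strictly_pos A \/ strictly_pos (fun phi => - A phi).
Proof.
have [|A_not_negl] := pselect (negR A); first by left.
right; have [p Ap] := not_negligible A_not_negl.
have [A_ge0|A_lt0] := ae_or_not U (fun phi => 0 <= A phi); [left|right]; exists p.
  by apply: aeW (aeI Ap A_ge0) => phi [Ap' Aphi_ge0]; rewrite -(ger0_norm Aphi_ge0).
apply: aeW (aeI Ap A_lt0) => phi [Ap' /negP]; rewrite -ltNge => Aphi_lt0.
by rewrite -(ltr0_norm Aphi_lt0).
Qed.

(* If [A] is bounded away from 0 by [Rad^p] and within [Rad^(p+1)] of a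
   positive net, then [A] cannot be negative. *)
Lemma hposR_hmkR A : modR A -> hposR (hmkR U A) <-> strictly_pos A.
Proof.
move=> A_mod; split=> [[A_neq0 [B [AB B_gt0]]] | [p Ap]].
  move: AB; rewrite hmkR_val // => -[_ AB].
  have [p Ap] : exists p, ae U (fun phi => Rad phi ^+ p <= `|A phi|).
    by apply: not_negligible => A_negl; apply/A_neq0/hmkR_eq0.
  exists p; apply: ae_smallW2 Ap (aeI B_gt0 (AB p.+1)) => phi small Ap' [Bphi_gt0 ABp].
  have := expr_le_addn small p 1; rewrite addn1 => Rad_le.
  have [A_ge0|A_lt0] := leP 0 (A phi); first by rewrite -(ger0_norm A_ge0).
  move: Ap' ABp; rewrite /= ltr0_norm // => Ap' ABp.
  by rewrite distrC in ABp; have := ler_norm (B phi - A phi); lra.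
split.
  by move/(hmkR_eq0 A_mod); apply: strictly_pos_not_negligible; exists p.
exists A; split; first by rewrite hmkR_val //; split=> //; exact: (net_equiv_refl U (absR R)).
apply: ae_smallW Ap => phi /andP[Rad_gt0 _]; apply: lt_le_trans.
exact: exprn_gt0.
Qed.

Lemma hposR_opp (x : F) : hposR (- x) -> ~ hposR x.
Proof.
elim/Rhat_ind: x => A A_mod.
change (hposR (hoppR (hmkR U A)) -> ~ hposR (hmkR U A)).
rewrite hoppRE // !hposR_hmkR //; last exact: moderate_netN.
by move=> NA_pos A_pos; exact: strictly_pos_opp A_pos NA_pos.
Qed.

Lemma hposR0 : ~ hposR (0 : F).
Proof. by case. Qed.

Lemma hposRD (x y : F) : hposR x -> hposR y -> hposR (x + y).
Proof.
elim/Rhat_ind: x => A A_mod; elim/Rhat_ind: y => B B_mod.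
change (hposR (hmkR U A) -> hposR (hmkR U B) -> hposR (haddR (hmkR U A) (hmkR U B))).
rewrite haddRE // !hposR_hmkR //; [exact: strictly_posD | exact: moderate_netD].
Qed.

Lemma hposRM (x y : F) : hposR x -> hposR y -> hposR (x * y).
Proof.
elim/Rhat_ind: x => A A_mod; elim/Rhat_ind: y => B B_mod.
change (hposR (hmkR U A) -> hposR (hmkR U B) -> hposR (hmulR (hmkR U A) (hmkR U B))).
rewrite hmulRE // !hposR_hmkR //; [exact: strictly_posM | exact: moderate_netM].
Qed.

Lemma hposR_total (x : F) : x = 0 \/ hposR x \/ hposR (- x).
Proof.
elim/Rhat_ind: x => A A_mod.
change (hmkR U A = hzeroR U \/ hposR (hmkR U A) \/ hposR (hoppR (hmkR U A))).
rewrite hoppRE // !hposR_hmkR ?hmkR_eq0 //; last exact: moderate_netN.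
exact: negligible_or_strictly_pos.
Qed.

Definition hle (x y : F) : bool := `[< hleR x y >].
Definition hlt (x y : F) : bool := `[< hltR x y >].
Definition hnorm (x : F) : F := if hle 0 x then x else - x.

Lemma hleRE (x y : F) : hleR x y <-> hle x y.
Proof. by rewrite /hle asboolE. Qed.

Lemma hle0E (x : F) : hle 0 x <-> x = 0 \/ hposR x.
Proof.
rewrite -hleRE /hleR /hltR.
have -> : haddR x (hoppR (hzeroR U)) = x by exact: (subr0 x).
by split=> -[x0|x_pos]; [left; rewrite x0 | right | left; rewrite x0 | right].
Qed.

Lemma hle0NE (x : F) : hle x 0 <-> x = 0 \/ hposR (- x).
Proof.
rewrite -hleRE /hleR /hltR.
have -> : haddR (hzeroR U) (hoppR x) = - x by exact: (add0r (- x)).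
by split=> -[x0|x_neg]; [left; rewrite x0 | right | left; rewrite x0 | right].
Qed.

Lemma hle0D (x y : F) : hle 0 x -> hle 0 y -> hle 0 (x + y).
Proof.
rewrite !hle0E => -[->|x_pos]; first by rewrite add0r.
by case=> [->|y_pos]; right; [rewrite addr0 | exact: hposRD].
Qed.

Lemma hle0M (x y : F) : hle 0 x -> hle 0 y -> hle 0 (x * y).
Proof.
rewrite !hle0E => -[->|x_pos]; first by rewrite mul0r; left.
by case=> [->|y_pos]; [rewrite mulr0; left | right; exact: hposRM].
Qed.

Lemma hle_anti (x : F) : hle 0 x -> hle x 0 -> x = 0.
Proof.
rewrite hle0E hle0NE => -[//|x_pos] [//|Nx_pos].
by case: (hposR_opp Nx_pos x_pos).
Qed.

Lemma hle_subr_ge0 (x y : F) : hle 0 (y - x) = hle x y.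
Proof.
have hleR_sub : hleR x y <-> x = y \/ hposR (y - x) by [].
apply/idP/idP; rewrite hle0E -hleRE hleR_sub => -[|]; try by right.
  by move/eqP; rewrite subr_eq0 => /eqP ->; left.
by move=> ->; left; rewrite subrr.
Qed.

Lemma hle_total (x : F) : hle 0 x || hle x 0.
Proof.
apply/orP; case: (hposR_total x) => [->|[x_pos|Nx_pos]].
- by left; apply/hle0E; left.
- by left; apply/hle0E; right.
by right; apply/hle0NE; right.
Qed.

Lemma hnormN (x : F) : hnorm (- x) = hnorm x.
Proof.
rewrite /hnorm; have -> : hle 0 (- x) = hle x 0 by rewrite -[RHS]hle_subr_ge0 sub0r.
case x_ge0: (hle 0 x); case x_le0: (hle x 0) => //.
- by rewrite (hle_anti x_ge0 x_le0) oppr0.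
- by rewrite opprK.
by move: (hle_total x); rewrite x_ge0 x_le0.
Qed.

Lemma hge0_norm (x : F) : hle 0 x -> hnorm x = x.
Proof. by rewrite /hnorm => ->. Qed.

Lemma hlt_def (x y : F) : hlt x y = (y != x) && hle x y.
Proof.
apply/idP/idP => [|/andP[/eqP yx]]; rewrite /hlt /hle !asboolE; last first.
  by case=> [xy|//]; case: yx.
move=> xy; apply/andP; split; last by rewrite asboolE; right.
apply/eqP => yx; move: xy; rewrite /hltR yx.
by change (~ hposR (x - x : F)); rewrite subrr; exact: hposR0.
Qed.

HB.instance Definition _ := Num.IntegralDomain_isLeReal.Build F
  hle0D hle0M hle_anti hle_subr_ge0 hle_total hnormN hge0_norm hlt_def.

End RealOrder.

Section ComplexModulus.
Variable R : realType.
Local Open Scope complex_scope.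

Lemma normc_ge0 (z : R[i]) : 0 <= Normc.normc z.
Proof. by case: z => a b; exact: sqrtr_ge0. Qed.

Definition absC : absval R R[i] :=
  @AbsVal R R[i] (@Normc.normc R) normc_ge0 (@Normc.normc0 R) (@normcN R)
    (@le_normcD R) (@Normc.normcM R).

Lemma absC_real (a : R) : absC a%:C = `|a|.
Proof. by rewrite /= expr0n /= addr0 sqrtr_sqr. Qed.

Lemma absC_Re (z : R[i]) : `|complex.Re z| <= absC z.
Proof.
case: z => a b; rewrite /= -sqrtr_sqr ler_sqrt ?addr_ge0 ?sqr_ge0 //.
by rewrite lerDl sqr_ge0.
Qed.

Lemma absC_Im (z : R[i]) : `|complex.Im z| <= absC z.
Proof.
case: z => a b; rewrite /= -sqrtr_sqr ler_sqrt ?addr_ge0 ?sqr_ge0 //.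
by rewrite lerDr sqr_ge0.
Qed.

Lemma absC_sqr (z : R[i]) :
  absC z * absC z = complex.Re z * complex.Re z + complex.Im z * complex.Im z.
Proof. by case: z => a b; rewrite /= -expr2 sqr_sqrtr ?addr_ge0 ?sqr_ge0 // !expr2. Qed.

Lemma absC_dist (z w : R[i]) : `|absC z - absC w| <= absC (z - w).
Proof.
have := absvD absC (z - w) w; have := absvD absC (w - z) z.
rewrite !subrK -(absvN absC (w - z)) opprB => zw wz.
by rewrite ler_norml; apply/andP; split; lra.
Qed.

End ComplexModulus.

Section ComplexClasses.
Variables (R : realType) (d : nat) (U : adm_uf R d).
Local Notation modR := (moderate_net U (absR R)).
Local Notation equivR := (net_equiv U (absR R)).
Local Notation modC := (moderate_net U (absC R)).
Local Notation equivC := (net_equiv U (absC R)).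
Local Open Scope complex_scope.

Lemma moderateCE A : moderateC U A <-> modC A.
Proof. by split=> -[m Am]; exists m; apply: aeW Am => phi; rewrite lecR. Qed.

Lemma negligibleCE A : negligibleC U A <-> negligible_net U (absC R) A.
Proof. by split=> A_negl p; apply: aeW (A_negl p) => phi; rewrite ltcR. Qed.

Lemma moderateC_real A : modR A -> modC (fun phi => (A phi)%:C).
Proof. by move=> [m Am]; exists m; apply: aeW Am => phi; rewrite absC_real. Qed.

Lemma net_equivC_real A B : equivR A B ->
  equivC (fun phi => (A phi)%:C) (fun phi => (B phi)%:C).
Proof. by move=> AB p; apply: aeW (AB p) => phi; rewrite -rmorphB absC_real. Qed.

Lemma moderateR_absC A : modC A -> modR (fun phi => absC R (A phi)).
Proof.
by move=> [m Am]; exists m; apply: aeW Am => phi; rewrite /= ger0_norm ?normc_ge0.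
Qed.

Lemma net_equivR_absC A B : equivC A B ->
  equivR (fun phi => absC R (A phi)) (fun phi => absC R (B phi)).
Proof. by apply: negligible_le; apply: ae_small => phi _; exact: absC_dist. Qed.

Lemma moderateR_Re A : modC A -> modR (fun phi => complex.Re (A phi)).
Proof.
move=> A_mod; apply: moderate_le (moderateR_absC A_mod); apply: ae_small => phi _.
by rewrite /= [X in _ <= X]ger0_norm ?normc_ge0 ?absC_Re.
Qed.

Lemma moderateR_Im A : modC A -> modR (fun phi => complex.Im (A phi)).
Proof.
move=> A_mod; apply: moderate_le (moderateR_absC A_mod); apply: ae_small => phi _.
by rewrite /= [X in _ <= X]ger0_norm ?normc_ge0 ?absC_Im.
Qed.

Lemma moderateC0 : modC (fun=> 0).
Proof. by apply: moderate_net_cst; rewrite absv0. Qed.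

Lemma moderateCi : modC (fun=> 'i).
Proof. by apply: moderate_net_cst; rewrite /= expr0n expr1n add0r sqrtr1. Qed.

Lemma Chat_inj (x y : Chat U) : sval x = sval y -> x = y.
Proof. by apply: eq_sig_hprop => ? ? ?; exact: Prop_irrelevance. Qed.

Lemma hmkC_val A : modC A -> sval (hmkC U A) = clsC U A.
Proof. by rewrite -moderateCE /hmkC; case: pselect. Qed.

Lemma hrepC_spec (x : Chat U) : modC (hrepC x) /\ sval x = clsC U (hrepC x).
Proof. by rewrite /hrepC; case: cid => A /= [/moderateCE A_mod ->]. Qed.

Lemma hrepC_moderate (x : Chat U) : modC (hrepC x).
Proof. by case: (hrepC_spec x). Qed.

Lemma clsC_eq A B : modC A -> modC B -> clsC U A = clsC U B <-> equivC A B.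
Proof.
move=> A_mod B_mod; split=> [AB | AB].
  suff [_ /negligibleCE] : clsC U A B by [].
  by rewrite AB; split; [exact/moderateCE | exact/negligibleCE/net_equiv_refl].
apply/seteqP; split=> C [C_mod /negligibleCE equivC]; split=> //; apply/negligibleCE.
  exact: net_equiv_trans (net_equiv_sym AB) equivC.
exact: net_equiv_trans AB equivC.
Qed.

Lemma hmkC_eq A B : modC A -> modC B -> hmkC U A = hmkC U B <-> equivC A B.
Proof.
move=> A_mod B_mod; rewrite -clsC_eq // -hmkC_val // -[clsC U B]hmkC_val //.
by split=> [-> // | AB]; apply: Chat_inj.
Qed.

Lemma hrepCK (x : Chat U) : hmkC U (hrepC x) = x.
Proof. by case: (hrepC_spec x) => x_mod x_cls; apply: Chat_inj; rewrite hmkC_val. Qed.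

Lemma hrepC_hmkC A : modC A -> equivC (hrepC (hmkC U A)) A.
Proof.
move=> A_mod; rewrite -(clsC_eq (hrepC_moderate _) A_mod).
by case: (hrepC_spec (hmkC U A)) => _ <-; rewrite hmkC_val.
Qed.

Lemma hzeroCE : hzeroC U = hmkC U (fun=> 0).
Proof. by apply: Chat_inj; rewrite hmkC_val //; exact: moderateC0. Qed.

Lemma haddCE A B : modC A -> modC B ->
  haddC (hmkC U A) (hmkC U B) = hmkC U (fun phi => A phi + B phi).
Proof.
move=> A_mod B_mod; rewrite /haddC hmkC_eq.
- exact: net_equivD (hrepC_hmkC A_mod) (hrepC_hmkC B_mod).
- exact: moderate_netD (hrepC_moderate _) (hrepC_moderate _).
- exact: moderate_netD.
Qed.

Lemma hmulCE A B : modC A -> modC B ->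
  hmulC (hmkC U A) (hmkC U B) = hmkC U (fun phi => A phi * B phi).
Proof.
move=> A_mod B_mod; rewrite /hmulC hmkC_eq.
- exact: net_equivM (hrepC_moderate _) B_mod (hrepC_hmkC A_mod) (hrepC_hmkC B_mod).
- exact: moderate_netM (hrepC_moderate _) (hrepC_moderate _).
- exact: moderate_netM.
Qed.

Lemma hRtoCE A : modR A -> hRtoC (hmkR U A) = hmkC U (fun phi => (A phi)%:C).
Proof.
move=> A_mod; rewrite /hRtoC hmkC_eq.
- exact: net_equivC_real (hrepR_hmkR A_mod).
- exact: moderateC_real (hrepR_moderate _).
- exact: moderateC_real.
Qed.

End ComplexClasses.

Arguments moderateC0 {R d U}.
Arguments moderateCi {R d U}.

Section Modulus.
Variables (R : realType) (d : nat) (U : adm_uf R d).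
Local Notation modR := (moderate_net U (absR R)).
Local Notation modC := (moderate_net U (absC R)).
Local Notation F := (RH U).
Local Open Scope complex_scope.

Lemma hmkR_ge0 A : modR A -> ae U (fun phi => 0 <= A phi) -> 0 <= hmkR U A :> F.
Proof.
move=> A_mod A_ge0; apply/hle0E.
have [A_negl|[A_pos|NA_pos]] := negligible_or_strictly_pos U A.
- by left; apply/hmkR_eq0.
- by right; apply/hposR_hmkR.
case: NA_pos => p NAp; exfalso; apply: ae_small_False (aeI NAp A_ge0).
by move=> phi /andP[Rad_gt0 _] []; have := exprn_gt0 p Rad_gt0; lra.
Qed.

Lemma hmkR_le A B : modR A -> modR B -> ae U (fun phi => A phi <= B phi) ->
  hmkR U A <= hmkR U B :> F.
Proof.
move=> A_mod B_mod AB; rewrite -subr_ge0.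
change (0 <= haddR (hmkR U B) (hoppR (hmkR U A)) :> F).
rewrite hoppRE // haddRE //; last exact: moderate_netN.
apply: hmkR_ge0; first exact/moderate_netD/moderate_netN.
by apply: aeW AB => phi; rewrite subr_ge0.
Qed.

(* [sqrt A] is moderate because [sqrt A <= 1 + |A|]. *)
Lemma ge0_sqr (a : F) : 0 <= a -> exists b : F, a = b * b.
Proof.
move=> /hle0E[->|]; first by exists 0; rewrite mulr0.
elim/Rhat_ind: a => A A_mod /(hposR_hmkR A_mod)[p Ap].
have sqrtA_mod : modR (fun phi => Num.sqrt (A phi)).
  apply: moderate_le (moderateD moderateR1 A_mod); apply: ae_small => phi _.
  rewrite /= normr1 ger0_norm ?sqrtr_ge0 //.
  have [A_ge0|A_lt0] := leP 0 (A phi); last by rewrite ltr0_sqrtr // addr_ge0.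
  have := sqr_sqrtr A_ge0; have := sqrtr_ge0 (A phi); rewrite ger0_norm //; nra.
exists (hmkR U (fun phi => Num.sqrt (A phi))).
change (hmkR U A = hmulR (hmkR U (fun phi => Num.sqrt (A phi)))
                         (hmkR U (fun phi => Num.sqrt (A phi)))).
rewrite hmulRE // hmkR_eq //; last exact: moderate_netM.
apply: net_equiv_ae; apply: ae_smallW Ap => phi /andP[Rad_gt0 _] Ap.
by rewrite -expr2 sqr_sqrtr // (le_trans _ Ap) // ltW // exprn_gt0.
Qed.

Definition hnormC (z : Chat U) : F := hmkR U (fun phi => absC R (hrepC z phi)).

Lemma hnormC_hmkC A : modC A -> hnormC (hmkC U A) = hmkR U (fun phi => absC R (A phi)).
Proof.
move=> A_mod; rewrite /hnormC hmkR_eq.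
- exact: net_equivR_absC (hrepC_hmkC A_mod).
- exact: moderateR_absC (hrepC_moderate _).
- exact: moderateR_absC.
Qed.

Lemma hnormC_ge0 z : 0 <= hnormC z.
Proof.
apply: hmkR_ge0; first exact: moderateR_absC (hrepC_moderate _).
by apply: ae_small => phi _; exact: normc_ge0.
Qed.

Lemma hnormC_eq0 z : hnormC z = 0 <-> z = hzeroC U.
Proof.
have z_mod := hrepC_moderate z.
rewrite -{2}(hrepCK z) hzeroCE hmkC_eq //; last exact: moderateC0.
rewrite /hnormC (hmkR_eq0 (moderateR_absC z_mod)).
by split=> z_negl; apply: negligible_le z_negl; apply: ae_small => phi _;
  rewrite /= subr0 ger0_norm ?normc_ge0.
Qed.

Lemma hnormCM z w : hnormC (hmulC z w) = hnormC z * hnormC w.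
Proof.
change (hnormC (hmulC z w) = hmulR (hnormC z) (hnormC w)).
rewrite {1}/hmulC hnormC_hmkC; last exact: moderate_netM (hrepC_moderate _) (hrepC_moderate _).
rewrite /hnormC hmulRE; try exact: moderateR_absC (hrepC_moderate _).
by congr hmkR; apply/funext => phi; exact: Normc.normcM.
Qed.

Lemma hnormCD z w : hnormC (haddC z w) <= hnormC z + hnormC w.
Proof.
have [z_mod w_mod] := (hrepC_moderate z, hrepC_moderate w).
change (hnormC (haddC z w) <= haddR (hnormC z) (hnormC w)).
rewrite {1}/haddC hnormC_hmkC; last exact: moderate_netD.
rewrite /hnormC haddRE; try exact: moderateR_absC.
apply: hmkR_le.
- exact/moderateR_absC/moderate_netD.
- exact: moderate_netD (moderateR_absC z_mod) (moderateR_absC w_mod).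
- by apply: ae_small => phi _; exact: le_normcD.
Qed.

Definition cplx (a b : Rhat U) : Chat U := haddC (hRtoC a) (hmulC (hiC U) (hRtoC b)).

Lemma cplx_hmkR A B : modR A -> modR B ->
  cplx (hmkR U A) (hmkR U B) = hmkC U (fun phi => (A phi)%:C + 'i * (B phi)%:C).
Proof.
move=> A_mod B_mod; have [Ac_mod Bc_mod] := (moderateC_real A_mod, moderateC_real B_mod).
rewrite /cplx !hRtoCE // /hiC hmulCE ?haddCE //; last exact: moderateCi.
exact: moderate_netM moderateCi Bc_mod.
Qed.

Lemma cplx_surj z : exists a b, z = cplx a b.
Proof.
have z_mod := hrepC_moderate z.
exists (hmkR U (fun phi => complex.Re (hrepC z phi))).
exists (hmkR U (fun phi => complex.Im (hrepC z phi))).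
rewrite cplx_hmkR; [|exact: moderateR_Re | exact: moderateR_Im].
by rewrite -{1}(hrepCK z); congr hmkC; apply/funext => phi; exact: complexE.
Qed.

Lemma hnormC_cplx_sqr (a b : F) : hnormC (cplx a b) * hnormC (cplx a b) = a * a + b * b.
Proof.
elim/Rhat_ind: a => A A_mod; elim/Rhat_ind: b => B B_mod.
have AB_mod : modC (fun phi => (A phi)%:C + 'i * (B phi)%:C).
  exact: moderate_netD (moderateC_real A_mod) (moderate_netM moderateCi (moderateC_real B_mod)).
change (hmulR (hnormC (cplx (hmkR U A) (hmkR U B))) (hnormC (cplx (hmkR U A) (hmkR U B)))
        = haddR (hmulR (hmkR U A) (hmkR U A)) (hmulR (hmkR U B) (hmkR U B))).
rewrite cplx_hmkR // hnormC_hmkC // !hmulRE ?haddRE //;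
  try exact: moderateR_absC; try exact: moderate_netM.
congr hmkR; apply/funext => phi.
by rewrite -[_ + _ in LHS](complexE (A phi +i* B phi)) absC_sqr.
Qed.

Lemma cabs_spec z (c : F) :
  (exists a b : Rhat U, [/\ z = cplx a b, hleR (hzeroR U) c &
                            hmulR c c = haddR (hmulR a a) (hmulR b b)])
  <-> c = hnormC z.
Proof.
split=> [[a [b [-> /hleRE c_ge0 cc]]] | ->].
  apply/eqP; rewrite -(@eqrXn2 _ 2) ?hnormC_ge0 //.
  by rewrite !expr2 hnormC_cplx_sqr; exact/eqP.
have [a [b z_ab]] := cplx_surj z.
exists a, b; split=> //; first exact/hleRE/hnormC_ge0.
by rewrite z_ab; exact: hnormC_cplx_sqr.
Qed.

Lemma hcabsE z : hcabs z = hnormC z.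
Proof.
rewrite /hcabs /choose_or; case: pselect => [c_ex|no_c]; last first.
  by case: no_c; exists (hnormC z); exact/cabs_spec.
by case: (cid c_ex) => c c_cabs /=; exact/cabs_spec.
Qed.

End Modulus.

Unset Implicit Arguments.
Local Close Scope classical_set_scope.

Theorem corollary4p3 (R : realType) (d : nat) (U : adm_uf R d) :
  (exists (F : realFieldType) (f : Rhat U -> F),
      [/\ bijective f, f (hzeroR U) = 0, f (honeR U) = 1,
          (forall x y, f (haddR x y) = f x + f y) &
          (forall x y, f (hmulR x y) = f x * f y) /\
          (forall x y, hleR x y <-> f x <= f y)]) /\
  (forall a : Rhat U, hleR (hzeroR U) a <-> exists b, a = hmulR b b) /\
  [/\ (forall z : Chat U, hleR (hzeroR U) (hcabs z)),
      (forall z : Chat U, hcabs z = hzeroR U <-> z = hzeroC U),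
      (forall z w : Chat U, hcabs (hmulC z w) = hmulR (hcabs z) (hcabs w)) &
      (forall z w : Chat U, hleR (hcabs (haddC z w)) (haddR (hcabs z) (hcabs w)))].
Proof.
split.
  exists (RH U), id; split=> //; first by exists id.
  by split=> // x y; exact: hleRE.
split.
  move=> a; rewrite hleRE; split=> [/ge0_sqr // | [b ->]].
  by change (0 <= (b : RH U) * b); rewrite -expr2 sqr_ge0.
split=> [z | z | z w | z w]; rewrite !hcabsE.
- exact/hleRE/hnormC_ge0.
- exact: hnormC_eq0.
- exact: hnormCM.
- exact/hleRE/hnormCD.
Qed.
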